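(* Let $G$ be a finite simple graph, let $k\ge 0$, and let $P$ be a $(3k+2)$-string based at a vertex $v$ of $G$. Let $w$ be the vertex of $P$ adjacent to $v$, and set $U=N_G(v)\setminus\{w\}$. Then the inclusion $I(G\setminus U)\hookrightarrow I(G)$ is a homotopy equivalence.
   Context: For a finite simple graph $G$, $I(G)$ is the independence complex (simplicial complex on $V(G)$ whose simplices are the independent sets). For $S\subseteq V(G)$, $G\setminus S$ is the induced subgraph on $V(G)\setminus S$. $N_G(v)$ is the set of neighbours of $v$. An $n$-string based at $v$ in $G$ is an induced subgraph $P$ of $G$ such that $P$ is isomorphic to the path graph with $n$ vertices, $v$ is an endpoint of $P$, and every vertex of $P$ other than $v$ is adjacent to no vertex of $V(G)\setminus V(P)$. *)

From mathcomp Require Import all_boot all_order all_algebra.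
From mathcomp Require Import all_classical all_reals all_analysis.
Import numFieldNormedType.Exports.
Import Order.TTheory GRing.Theory Num.Theory.

Set Implicit Arguments.
Unset Strict Implicit.
Unset Printing Implicit Defensive.

Local Open Scope classical_set_scope.
Local Open Scope ring_scope.

(* A finite simple graph G is a finite vertex type T with a symmetric,
   irreflexive adjacency relation e (these two properties are hypotheses
   of the theorem). *)

Definition nbhd (T : finType) (e : rel T) (v : T) : {set T} := [set u | e v u].

(* A is an independent set of the induced subgraph G \ S, i.e. an
   independent set of G avoiding S. *)
Definition indep_in (T : finType) (e : rel T) (S A : {set T}) : bool :=
  [disjoint A & S] && [forall x in A, forall y in A, ~~ e x y].

Definition indep_complex (T : finType) (e : rel T) (S : {set T})
  : {set {set T}} := [set A | indep_in e S A].

(* Geometric realization |K| of a simplicial complex K on the vertex set T,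
   as a subspace of R^T (product topology): the points with nonnegative
   barycentric coordinates summing to 1 whose support is a face of K. *)
Definition realization (R : realType) (T : finType) (K : {set {set T}})
  : set {ptws T -> R} :=
  [set x | (forall t, 0 <= x t) /\ \sum_(t : T) x t = 1
           /\ finset (fun t => x t != 0) \in K].

(* f and g (maps X -> X sending A into A) are homotopic as maps A -> A:
   a homotopy H : [0,1] x A -> A, continuous for the subspace topology. *)
Definition homotopic_on (R : realType) (X : topologicalType) (A : set X)
  (f g : X -> X) : Prop :=
  exists H : R * X -> X,
    {within `[(0:R), 1] `*` A, continuous H} /\
    (forall t x, 0 <= t <= 1 -> A x -> A (H (t, x))) /\
    (forall x, A x -> H (0, x) = f x) /\
    (forall x, A x -> H (1, x) = g x).

(* The inclusion A ⊆ B of subspaces of X is a homotopy equivalence: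
   there is a continuous r : B -> A with r ∘ incl ≃ id_A and
   incl ∘ r ≃ id_B. *)
Definition inclusion_homotopy_equivalence (R : realType) (X : topologicalType)
  (A B : set X) : Prop :=
  A `<=` B /\
  exists r : X -> X,
    {within B, continuous r} /\ r @` B `<=` A /\
    homotopic_on R A id r /\ homotopic_on R B id r.

(* P (given by its vertex set) is an n-string based at v in G: the induced
   subgraph on P is isomorphic to the path graph on n vertices, v is an
   endpoint of it (degree <= 1 in P), and every vertex of P other than v
   has no neighbour outside P. *)
Definition is_string (T : finType) (e : rel T) (n : nat) (v : T)
  (P : {set T}) : Prop :=
  (exists f : 'I_n -> T,
      injective f /\ f @: [set: 'I_n]%SET = P /\
      forall i j : 'I_n, e (f i) (f j) = ((i.+1 == j) || (j.+1 == i))%N)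
  /\ v \in P
  /\ (#|[set y in P | e v y]%SET| <= 1)%N
  /\ (forall x, x \in P -> x != v -> forall y, y \notin P -> ~~ e x y).

Arguments realization R {T} K.
Arguments homotopic_on R {X} A f g.
Arguments inclusion_homotopy_equivalence R {X} A B.

From mathcomp Require Import all_boot all_order all_algebra.
From mathcomp Require Import all_classical all_reals all_analysis.
From mathcomp Require Import zify lra.
Import numFieldNormedType.Exports.
Import Order.TTheory GRing.Theory Num.Theory.

Set Implicit Arguments.
Unset Strict Implicit.
Unset Printing Implicit Defensive.

(* Number the string v = p_0, w = p_1, ..., p_(3k+1).  Folding p_(3j-1) onto
   p_(3j+1) for j = k, ..., 1 and then every vertex of U onto p_1 gives vertex
   maps id = G_0, ..., G_(k+1).  At each stage every neighbour of the target
   that has not yet been folded away is a neighbour of the folded vertices, so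
   the images of an independent set under consecutive G_i form together an
   independent set: consecutive maps are contiguous, on I(G) and on I(G \ U)
   alike, since no G_i creates vertices of U.  Interpolating linearly along
   the chain is then a homotopy, on both realizations, from the identity to
   the map induced by G_(k+1), which lands in I(G \ U). *)

Section SimplicialHomotopy.
Variables (R : realType) (T : finType).
Local Open Scope ring_scope.

Definition down_closed (K : {set {set T}}) : Prop :=
  forall A B : {set T}, A \subset B -> B \in K -> A \in K.

Definition contiguous (K : {set {set T}}) (f g : T -> T) : Prop :=
  forall A, A \in K -> f @: A :|: g @: A \in K.

(* The affine map of realizations induced by the vertex map [h]. *)
Definition push (h : T -> T) (x : T -> R) : T -> R :=
  fun c => \sum_(s | h s == c) x s.

Lemma push_ge0 h x c : (forall t, 0 <= x t) -> 0 <= push h x c.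
Proof. by move=> x0; apply: sumr_ge0. Qed.

Lemma push_sum h x : \sum_c push h x c = \sum_s x s.
Proof. by rewrite [RHS](partition_big h predT). Qed.

Lemma push_id x : push id x = x.
Proof.
by apply: funext => c; rewrite /push (big_pred1 c) // => s; rewrite eq_sym.
Qed.

Lemma push_supp h x : (forall t, 0 <= x t) ->
  [set c | push h x c != 0] = h @: [set s | x s != 0].
Proof.
move=> x0; apply/setP => c; rewrite inE; apply/idP/imsetP => [|[s]].
  apply: contraNP => nc; apply/eqP/big1 => s /eqP hs.
  by have [//|xs] := eqVneq (x s) 0; case: nc; exists s; rewrite ?inE.
rewrite inE => xs ->; apply: contra xs => /eqP /psumr_eq0P sum0.
by apply/eqP/sum0.
Qed.

Lemma push_realization (K L : {set {set T}}) h x :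
  (forall A, A \in K -> h @: A \in L) ->
  realization R K x -> realization R L (push h x).
Proof.
move=> hKL [x0 [x1 xK]]; split; first by move=> c; apply: push_ge0.
by rewrite push_sum push_supp //; split => //; apply: hKL.
Qed.

Lemma realizationS (K L : {set {set T}}) :
  K \subset L -> (realization R K `<=` realization R L)%classic.
Proof. by move=> /fintype.subsetP KL x [x0 [x1 /KL xL]]. Qed.

Lemma ptws_continuous (X : topologicalType) (f : X -> {ptws T -> R}) :
  (forall c, continuous (fun x => f x c)) -> continuous f.
Proof.
(* [pointwise_cvgP] wants a topology on the index type; any one will do. *)
move=> fc x; pose f' : X -> {ptws discrete_topology T -> R} := f.
apply/(@pointwise_cvgP (discrete_topology T) R (f' @ x)%classic (f' x)) => //.
by move=> c; apply: fc.
Qed.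

Lemma sum_continuous (X : topologicalType) (I : Type) (r : seq I) (P : pred I)
  (F : I -> X -> R) :
  (forall i, continuous (F i)) ->
  continuous (fun x => \sum_(i <- r | P i) F i x).
Proof.
move=> Fc; apply: continuous_big => [|i _]; first exact: add_continuous.
exact: Fc.
Qed.

Lemma push_continuous h : continuous (push h : {ptws T -> R} -> {ptws T -> R}).
Proof.
apply: ptws_continuous => c.
by apply: sum_continuous => s; apply: proj_continuous.
Qed.

Definition hat (s : R) : R := Num.max 0 (1 - `|s|).

Lemma hat_ge0 s : 0 <= hat s.
Proof. by rewrite /hat le_max lexx. Qed.

Lemma hat_eq0 s : 1 <= `|s| -> hat s = 0.
Proof. by move=> s1; rewrite /hat max_l // subr_le0. Qed.

Lemma hatE s : `|s| <= 1 -> hat s = 1 - `|s|.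
Proof. by move=> s1; rewrite /hat max_r // subr_ge0. Qed.

Lemma hat_neq0 s : hat s != 0 -> `|s| < 1.
Proof. by apply: contraNT; rewrite -leNgt => /hat_eq0 ->. Qed.

Lemma hat_continuous : continuous hat.
Proof.
move=> s; apply: (continuous_max (@cst_continuous R R 0 s)).
exact: continuousB (@cst_continuous R R 1 s) (@norm_continuous _ R^o s).
Qed.

Lemma sum_hat m y : 0 <= y <= m%:R -> \sum_(i < m.+1) hat (y - i%:R) = 1.
Proof.
elim: m y => [|m IH] y.
  by rewrite big_ord1 subr0 -eq_le => /eqP <-; rewrite hatE normr0 ?subr0.
case/andP=> y0 ym; rewrite big_ord_recl subr0.
under eq_bigr => i _ do rewrite lift0 -natr1 opprD addrA addrAC.
have [y1|y1] := leP 1 y.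
  by rewrite hat_eq0 ?ger0_norm // add0r IH // subr_ge0 y1 lerBlDr natr1.
rewrite big_ord_recl subr0 big1 => [|i _]; last first.
  have i0 := ler0n R i.
  by rewrite hat_eq0 // lift0 -natr1 ler0_norm; lra.
have yn : `|y| = y by rewrite ger0_norm.
have y1n : `|y - 1| = 1 - y by rewrite ler0_norm ?opprB; lra.
by rewrite addr0 !hatE ?yn ?y1n; lra.
Qed.

Lemma hat_support m y : (0 < m)%N -> 0 <= y <= m%:R ->
  exists2 n, (n < m)%N &
    forall i, (i <= m)%N -> hat (y - i%:R) != 0 -> i = n \/ i = n.+1.
Proof.
move=> m0 /andP [y0 ym]; have /andP [ny yn] := truncn_itv y0.
have nm : (Num.truncn y <= m)%N by rewrite -(ler_nat R); apply: le_trans ym.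
exists (minn (Num.truncn y) m.-1); first lia.
move=> i im /hat_neq0; rewrite ltr_norml => /andP [yi1 yi2].
have : (i < (Num.truncn y).+2)%N by rewrite -(ltr_nat R) -natr1; lra.
have : (Num.truncn y < i.+1)%N by rewrite -(ltr_nat R) -natr1; lra.
lia.
Qed.

(* At time [t] with [m t] in [[i, i+1]] this is the linear interpolation
   between [push (G i) x] and [push (G i.+1) x]. *)
Definition chain_homotopy m (G : nat -> T -> T) (z : R * (T -> R)) : T -> R :=
  fun c => \sum_(i < m.+1) hat (m%:R * z.1 - i%:R) * push (G i) z.2 c.

Lemma chain_homotopy0 m G x : G 0%N = id -> chain_homotopy m G (0, x) = x.
Proof.
move=> G0; apply: funext => c; rewrite /chain_homotopy /= mulr0 big_ord_recl.
rewrite G0 push_id big1 => [|i _].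
  by rewrite addr0 subr0 hatE normr0 ?ler01 // subr0 mul1r.
by rewrite hat_eq0 ?mul0r // sub0r normrN normr_nat lift0 ler1n.
Qed.

Lemma chain_homotopy1 m G x : chain_homotopy m G (1, x) = push (G m) x.
Proof.
apply: funext => c; rewrite /chain_homotopy /= mulr1 big_ord_recr /= subrr.
rewrite big1 => [|i _].
  by rewrite add0r hatE normr0 ?ler01 // subr0 mul1r.
have : (i.+1 <= m)%N := ltn_ord i.
by rewrite -(ler_nat R) -natr1 => im; rewrite hat_eq0 ?mul0r // ger0_norm; lra.
Qed.

Lemma chain_homotopy_continuous m G :
  continuous (chain_homotopy m G : R * {ptws T -> R} -> {ptws T -> R}).
Proof.
apply: ptws_continuous => c; apply: sum_continuous => i z.
have hatzc : {for z, continuous (fun z : R * {ptws T -> R} =>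
                                   hat (m%:R * z.1 - i%:R))}.
  have affc : {for z, continuous (fun z : R * {ptws T -> R} =>
                                    m%:R * z.1 - i%:R)}.
    have fstc : {for z, continuous (fun z : R * {ptws T -> R} => z.1)}.
      exact: cvg_fst.
    exact: continuousB (continuousM (@cst_continuous _ R m%:R z) fstc)
                       (@cst_continuous _ R i%:R z).
  have hatc : {for m%:R * z.1 - i%:R, continuous hat} by exact: hat_continuous.
  exact: continuous_comp affc hatc.
have pushc : {for z, continuous (fun z : R * {ptws T -> R} =>
                                   push (G i) z.2 c)}.
  apply: sum_continuous => s y.
  apply: (@continuous_comp _ _ _ snd (fun g : {ptws T -> R} => g s)).
    exact: cvg_snd.
  exact: proj_continuous.
exact: continuousM hatzc pushc.
Qed.

Lemma chain_homotopy_realization K m G t x :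
  (0 < m)%N -> down_closed K ->
  (forall i, (i < m)%N -> contiguous K (G i) (G i.+1)) ->
  0 <= t <= 1 -> realization R K x ->
  realization R K (chain_homotopy m G (t, x)).
Proof.
move=> m0 Kdown GK /andP [t0 t1] [x0 [x1 xK]].
have mt : 0 <= m%:R * t <= m%:R.
  by rewrite mulr_ge0 ?ler0n //= -[leRHS]mulr1 ler_wpM2l ?ler0n.
split; [|split].
- by move=> c; apply: sumr_ge0 => i _; rewrite mulr_ge0 ?hat_ge0 ?push_ge0.
- rewrite /chain_homotopy exchange_big /=.
  under eq_bigr do rewrite -mulr_sumr push_sum x1 mulr1.
  exact: sum_hat.
have [n nm hn] := hat_support m0 mt.
apply: Kdown (GK n nm _ xK); apply/fintype.subsetP => c; rewrite inE => Hc.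
have [i] : exists i : 'I_m.+1, hat (m%:R * t - i%:R) * push (G i) x c != 0.
  apply/existsP; apply: contraNT Hc => /existsPn Hc.
  by apply/eqP/big1 => i _; apply/eqP; rewrite -[_ == _]negbK Hc.
rewrite mulf_eq0 negb_or => /andP [/hn hi].
move=> pc; have : c \in [set c | push (G i) x c != 0] by rewrite inE.
rewrite push_supp // => cG.
by case: (hi (ltn_ord i)) => <-; rewrite finset.in_setU cG ?orbT.
Qed.

Lemma homotopic_on_chain K m G :
  (0 < m)%N -> down_closed K -> G 0%N = id ->
  (forall i, (i < m)%N -> contiguous K (G i) (G i.+1)) ->
  homotopic_on R (realization R K) id (push (G m)).
Proof.
move=> m0 Kdown G0 GK; exists (chain_homotopy m G); split; [|split; [|split]].
- by apply: continuous_subspaceT => z; apply: chain_homotopy_continuous.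
- by move=> t x t01 xK; apply: chain_homotopy_realization.
- by move=> x _; apply: chain_homotopy0.
- by move=> x _; apply: chain_homotopy1.
Qed.

Lemma inclusion_homotopy_equivalence_chain (K L : {set {set T}}) m G :
  (0 < m)%N -> K \subset L -> down_closed K -> down_closed L -> G 0%N = id ->
  (forall i, (i < m)%N ->
     contiguous K (G i) (G i.+1) /\ contiguous L (G i) (G i.+1)) ->
  (forall A, A \in L -> G m @: A \in K) ->
  inclusion_homotopy_equivalence R (realization R K) (realization R L).
Proof.
move=> m0 KL Kdown Ldown G0 GKL GmLK; split; first exact: realizationS.
exists (push (G m)); split; [|split; [|split]].
- by apply: continuous_subspaceT => x; apply: push_continuous.
- by move=> _ [x xL <-]; apply: push_realization xL.
- by apply: homotopic_on_chain => // i /GKL [].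
- by apply: homotopic_on_chain => // i /GKL [].
Qed.

End SimplicialHomotopy.

Section IndependentSets.
Variables (T : finType) (e : rel T).
Implicit Types (A B D S X : {set T}) (a x : T).

Definition independent (A : {set T}) : bool :=
  [forall x in A, forall y in A, ~~ e x y].

Lemma indep_inE S A : indep_in e S A = [disjoint A & S] && independent A.
Proof. by []. Qed.

Lemma independentP A :
  reflect (forall x y, x \in A -> y \in A -> ~~ e x y) (independent A).
Proof.
apply: (iffP forall_inP) => [iA x y xA yA|iA x xA].
  by have /forall_inP := iA x xA; apply.
by apply/forall_inP => y; apply: iA.
Qed.

Lemma independentS A B : A \subset B -> independent B -> independent A.
Proof.
move=> /fintype.subsetP AB /independentP iB; apply/independentP => x y xA yA.
by apply: iB; apply: AB.
Qed.

Lemma indep_complex_down_closed S : down_closed (indep_complex e S).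
Proof.
move=> A B AB; rewrite !inE !indep_inE => /andP [dB iB].
by rewrite (disjointWl AB dB) (independentS AB iB).
Qed.

Lemma indep_complexS S1 S2 :
  S1 \subset S2 -> indep_complex e S2 \subset indep_complex e S1.
Proof.
move=> S12; apply/fintype.subsetP => A.
rewrite !inE !indep_inE => /andP [dA ->].
by rewrite (disjointWr S12 dA).
Qed.

Definition fold_to (B : {set T}) (a x : T) : T := if x \in B then a else x.

Lemma fold_to_notin X B a x :
  a \notin X -> x \notin X -> fold_to B a x \notin X.
Proof. by rewrite /fold_to; case: ifP. Qed.

Lemma fold_to_notin_source B a x : a \notin B -> fold_to B a x \notin B.
Proof. by rewrite /fold_to; case: ifP => // /negbT. Qed.

Hypotheses (sym : symmetric e) (irr : irreflexive e).

Lemma independent_fold D B a S :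
  (forall b y, b \in B -> y \notin D -> e a y -> e b y) ->
  independent S -> [disjoint S & D] -> independent (S :|: fold_to B a @: S).
Proof.
move=> aB /independentP iS dSD.
have img z : z \in S :|: fold_to B a @: S ->
    z \in S \/ z = a /\ exists2 b, b \in S & b \in B.
  rewrite finset.in_setU => /orP [zS|/imsetP [x xS ->]]; first by left.
  by rewrite /fold_to; case: ifP => xB; [right; split => //; exists x | left].
have aS y b : y \in S -> b \in S -> b \in B -> ~~ e a y.
  move=> yS bS bB; apply: contra (iS b y bS yS) => /(aB b y bB) -> //.
  by rewrite (disjointFr dSD yS).
apply/independentP => x y /img [xS|[-> [b bS bB]]] /img [yS|[-> [b' bS' bB']]].
- exact: iS.
- by rewrite sym; apply: aS bS' bB'.
- exact: aS bS bB.
- by rewrite irr.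
Qed.

End IndependentSets.

Section StringFolds.
Variables (T : finType) (e : rel T) (k : nat) (p : nat -> T) (U : {set T}).
Implicit Types (A X : {set T}).
Hypotheses (sym : symmetric e) (irr : irreflexive e).
Hypothesis p_adj : forall i j, i <= 3 * k + 1 -> j <= 3 * k + 1 ->
  e (p i) (p j) = (i.+1 == j) || (j.+1 == i).
Hypothesis p_inj : forall i j, i <= 3 * k + 1 -> j <= 3 * k + 1 ->
  p i = p j -> i = j.
Hypothesis p_nbhd : forall l y, 0 < l <= 3 * k + 1 -> e (p l) y ->
  exists2 m, m <= 3 * k + 1 & y = p m.
Hypothesis U_adj : forall u, u \in U -> e (p 0) u.
Hypothesis U_off : forall i, i <= 3 * k + 1 -> p i \notin U.

(* Stage [i < k] folds [p (3j - 1)] onto [p (3j + 1)] for [j = k - i],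
   working inwards from the far end of the string so that the other
   neighbour [p (3j + 2)] of the target is already gone; stage [k] folds [U]
   onto [p 1]. *)
Definition fold_source i : {set T} :=
  if i < k then [set p (3 * (k - i) - 1)] else U.
Definition fold_target i : T := if i < k then p (3 * (k - i) + 1) else p 1.
Definition string_folds i (x : T) : T :=
  iteri i (fun j => fold_to (fold_source j) (fold_target j)) x.
Definition folded i : {set T} := \bigcup_(j < i) fold_source j.

Lemma fold_target_notin_source i j :
  j <= i <= k -> fold_target i \notin fold_source j.
Proof.
case/andP=> ji ik; rewrite /fold_target /fold_source.
have [jk|kj] := ltnP j k; last first.
  by rewrite ifN -?leqNgt; [apply: U_off|]; lia.
rewrite finset.in_set1; apply/eqP; case: ltnP => _ /p_inj; lia.
Qed.

Lemma string_folds_notin_folded i x :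
  i <= k.+1 -> string_folds i x \notin folded i.
Proof.
elim: i => [|i IH] ik; first by rewrite /folded big_ord0 inE.
rewrite /folded big_ord_recr finset.in_setU negb_or /=.
have tgt_src : fold_target i \notin fold_source i.
  by apply: fold_target_notin_source; lia.
rewrite fold_to_notin_source // andbT.
apply: fold_to_notin; last exact: IH (ltnW ik).
apply/bigcupP => -[j _]; apply/negP; apply: fold_target_notin_source.
by have := ltn_ord j; lia.
Qed.

Lemma string_vertex_folded j i :
  j < i -> j < k -> p (3 * (k - j) - 1) \in folded i.
Proof.
move=> ji jk; apply/bigcupP; exists (Ordinal ji) => //.
by rewrite /fold_source /= jk finset.in_set1.
Qed.

Lemma fold_target_nbhd i b y : i <= k ->
  b \in fold_source i -> y \notin folded i -> e (fold_target i) y -> e b y.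
Proof.
move=> ik; rewrite /fold_source /fold_target; case: ltnP => [ik'|ki].
  rewrite finset.in_set1 => /eqP -> yF ety.
  have [m mN ym] := p_nbhd (l := 3 * (k - i) + 1) ltac:(lia) ety.
  move: ety yF; rewrite ym p_adj; [|lia|lia] => /orP [] /eqP ml.
    rewrite (_ : m = 3 * (k - i.-1) - 1); last lia.
    by case/negP; apply: string_vertex_folded; lia.
  by move=> _; rewrite p_adj; lia.
move=> bU yF ety; have [m mN ym] := p_nbhd (l := 1) ltac:(lia) ety.
move: ety yF; rewrite ym p_adj; [|lia|lia] => /orP [] /eqP ml.
  rewrite (_ : m = 3 * (k - k.-1) - 1); last lia.
  by case/negP; apply: string_vertex_folded; lia.
by rewrite (_ : m = 0); [rewrite sym U_adj | lia].
Qed.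

Lemma string_folds_step_independent i A : i <= k ->
  independent e (string_folds i @: A) ->
  independent e (string_folds i @: A :|: string_folds i.+1 @: A).
Proof.
move=> ik iA.
have -> : string_folds i.+1 @: A =
    fold_to (fold_source i) (fold_target i) @: (string_folds i @: A).
  by rewrite -imset_comp.
apply: (independent_fold sym irr (D := folded i)) => //.
  by move=> b y bB yF; apply: fold_target_nbhd.
rewrite finset.disjoints_subset; apply/fintype.subsetP => _ /imsetP [x _ ->].
by rewrite inE string_folds_notin_folded //; lia.
Qed.

Lemma string_folds_independent i A :
  i <= k.+1 -> independent e A -> independent e (string_folds i @: A).
Proof.
move=> + iA; elim: i => [_|i IH ik].
  by apply: independentS iA; apply/fintype.subsetP => _ /imsetP [x xA ->].
apply: independentS (string_folds_step_independent _ (IH _)); last lia.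
- exact: finset.subsetUr.
- lia.
Qed.

Lemma string_folds_notin X i x : (forall j, j <= 3 * k + 1 -> p j \notin X) ->
  x \notin X -> string_folds i x \notin X.
Proof.
move=> pX xX; elim: i => //= i IH; apply: fold_to_notin IH.
by rewrite /fold_target; case: ifP => _; apply: pX; lia.
Qed.

Lemma string_folds_contiguous X i : i <= k ->
  (forall j, j <= 3 * k + 1 -> p j \notin X) ->
  contiguous (indep_complex e X) (string_folds i) (string_folds i.+1).
Proof.
move=> ik pX A; rewrite !inE !indep_inE => /andP [dA iA].
have iS : independent e (string_folds i @: A).
  by apply: string_folds_independent => //; lia.
rewrite string_folds_step_independent // andbT.
rewrite finset.disjoints_subset; apply/fintype.subsetP => y.
by rewrite finset.in_setU inE => /orP [] /imsetP [x xA ->];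
  rewrite string_folds_notin ?(disjointFr dA xA).
Qed.

Lemma string_folds_last A :
  independent e A -> string_folds k.+1 @: A \in indep_complex e U.
Proof.
move=> iA; rewrite inE indep_inE string_folds_independent // andbT.
rewrite finset.disjoints_subset; apply/fintype.subsetP => _ /imsetP [x _ ->].
rewrite inE; have := string_folds_notin_folded x (leqnn k.+1).
apply: contra => xU.
have srcU : fold_source k = U by rewrite /fold_source ltnn.
by apply/bigcupP; exists ord_max; rewrite // srcU.
Qed.

End StringFolds.

Section StringIndexing.
Variables (T : finType) (e : rel T).

Definition path_enum n (p : nat -> T) (P : {set T}) : Prop :=
  [/\ forall i j, i <= n -> j <= n ->
        e (p i) (p j) = (i.+1 == j) || (j.+1 == i),
      forall i j, i <= n -> j <= n -> p i = p j -> i = j,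
      forall i, i <= n -> p i \in P &
      forall y, y \in P -> exists2 i, i <= n & y = p i].

Lemma path_enum_rev n p P :
  path_enum n p P -> path_enum n (fun i => p (n - i)) P.
Proof.
case=> padj pinj pP Pp; split.
- by move=> i j ? ?; rewrite padj ?leq_subr //; lia.
- by move=> i j ? ? /pinj; rewrite !leq_subr => /(_ isT isT); lia.
- by move=> i _; rewrite pP ?leq_subr.
- by move=> y /Pp [i ? ->]; exists (n - i); rewrite ?subKn ?leq_subr.
Qed.

Lemma path_end_index n p P i0 : path_enum n p P -> i0 <= n ->
  #|[set y in P | e (p i0) y]| <= 1 -> i0 = 0 \/ i0 = n.
Proof.
case=> padj pinj pP _ i0n deg.
have [->|i0pos] := posnP i0; first by left.
have [->|i0n'] := eqVneq i0 n; first by right.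
have nbrs : [set p i0.-1; p i0.+1] \subset [set y in P | e (p i0) y].
  apply/fintype.subsetP => y; rewrite !inE => /orP [] /eqP ->;
    rewrite pP ?padj //=; lia.
have := leq_trans (subset_leq_card nbrs) deg.
rewrite cards2; case: eqP => // p_eq.
by have := pinj i0.-1 i0.+1 ltac:(lia) ltac:(lia) p_eq; lia.
Qed.

Lemma string_path_enum n v P :
  is_string e n.+1 v P -> exists2 p, p 0 = v & path_enum n p P.
Proof.
case=> [[f [finj [fP fadj]]] [vP [deg _]]].
have fenum : path_enum n (fun i => f (inord i)) P.
  split.
  - by move=> i j ? ?; rewrite fadj !inordK.
  - by move=> i j ? ? /finj /(congr1 val); rewrite /= !inordK.
  - by move=> i _; rewrite -fP imset_f.
  - by rewrite -fP => y /imsetP [i _ ->]; exists i; rewrite ?inord_val // -ltnS.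
have [_ _ _ /(_ v vP) [i0 i0n vi0]] := fenum; rewrite vi0 in deg.
case: (path_end_index fenum i0n deg) => i0E; subst i0.
  by exists (fun i => f (inord i)).
exists (fun i => f (inord (n - i))); first by rewrite subn0.
exact: path_enum_rev fenum.
Qed.

Lemma string_nbhd n v P p :
  is_string e n.+1 v P -> p 0 = v -> path_enum n p P ->
  forall l y, 0 < l <= n -> e (p l) y -> exists2 m, m <= n & y = p m.
Proof.
case=> _ [_ [_ out]] p0 [_ pinj pP Pp] l y /andP [l0 ln] ely; apply: Pp.
apply: contraLR ely => yP; apply: out yP; first exact: pP.
by apply/eqP; rewrite -p0 => /pinj; lia.
Qed.

End StringIndexing.

Theorem proposition2p7 (R : realType) (T : finType) (e : rel T)
  (k : nat) (v w : T) (P : {set T}) :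
  symmetric e -> irreflexive e ->
  is_string e (3 * k + 2) v P ->
  w \in P -> e v w ->
  inclusion_homotopy_equivalence R
    (realization R (indep_complex e (nbhd e v :\ w)))
    (realization R (indep_complex e finset.set0)).
Proof.
move=> sym irr Pstr wP evw.
have {}Pstr : is_string e (3 * k + 1).+1 v P by rewrite addn1 -addn2.
have [p p0 penum] := string_path_enum Pstr.
have p_nbhd := string_nbhd Pstr p0 penum.
case: penum => p_adj p_inj _ Pp; subst v.
have w1 : w = p 1.
  have [j jn wj] := Pp w wP.
  by move: evw; rewrite wj p_adj // => adj; congr p; lia.
set U := nbhd e (p 0) :\ w.
have U_adj u : u \in U -> e (p 0) u by rewrite !inE => /andP [].
have U_off i : i <= 3 * k + 1 -> p i \notin U.
  move=> iN; rewrite !inE negb_and negbK p_adj // w1.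
  by case: (i =P 1) => [->|i1]; rewrite ?eqxx //; apply/orP; right; lia.
apply: (@inclusion_homotopy_equivalence_chain R T _ _ k.+1
          (string_folds k p U)).
- by [].
- by apply: indep_complexS; apply: finset.sub0set.
- exact: indep_complex_down_closed.
- exact: indep_complex_down_closed.
- by [].
- by move=> i ik; split; apply: string_folds_contiguous => // j _; rewrite inE.
- by move=> A; rewrite inE indep_inE => /andP [_]; apply: string_folds_last.
Qed.
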